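(* Let $\mathcal F$ be a family of subsets of an ordinal $\theta$, and suppose there is an ordinal $\alpha\le\theta$ that cannot be written as a countable union of sets orthogonal to $\mathcal F$. Let $\alpha$ be the least such ordinal. Then $\alpha$ has uncountable cofinality.
   Context: A set $B$ is orthogonal to $\mathcal F$ if $B\cap x$ is finite for every $x\in\mathcal F$. An ordinal $\alpha$ is identified with the set of smaller ordinals. *)

From HB Require Import structures.
From mathcomp Require Import all_boot all_order.
From mathcomp Require Import boolp classical_sets cardinality.
Set Implicit Arguments. Unset Strict Implicit. Unset Printing Implicit Defensive.
Import Order.TTheory.
Local Open Scope classical_set_scope.
Local Open Scope order_scope.

(* The ordinal theta is modelled (up to order isomorphism) by a well-ordered
   type T: a totally ordered type whose strict order is well founded. *)
Definition well_ordered (d : Order.disp_t) (T : orderType d) : Prop :=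
  well_founded (fun x y : T => x < y).

(* Ordinals alpha <= theta, viewed as initial segments of theta:
   Some x stands for the ordinal x = {y | y < x}, None stands for theta itself. *)
Definition seg (d : Order.disp_t) (T : orderType d) (a : option T) : set T :=
  match a with
  | Some x => [set y | y < x]
  | None => setT
  end.

Definition orthogonal (T : Type) (F : set (set T)) (B : set T) : Prop :=
  forall x, F x -> finite_set (B `&` x).

(* A is a countable union of sets orthogonal to F (finite unions are included,
   by padding with the empty set, which is orthogonal to every F). *)
Definition countable_orth_union (T : Type) (F : set (set T)) (A : set T) : Prop :=
  exists B : nat -> set T, (forall n, orthogonal F (B n)) /\ A = \bigcup_n B n.

Definition cofinal_in (d : Order.disp_t) (T : orderType d) (A C : set T) : Prop :=
  C `<=` A /\ forall b, A b -> exists2 c, C c & b <= c.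

(* A has uncountable cofinality: no countable subset is cofinal in A
   (this excludes 0 and successor ordinals, whose cofinality is 0 resp. 1). *)
Definition uncountable_cofinality (d : Order.disp_t) (T : orderType d) (A : set T) : Prop :=
  forall C : set T, countable C -> ~ cofinal_in A C.

From HB Require Import structures.
From mathcomp Require Import all_boot all_order.
From mathcomp Require Import boolp classical_sets cardinality.
Set Implicit Arguments. Unset Strict Implicit. Unset Printing Implicit Defensive.
Local Open Scope classical_set_scope.
Import Order.TTheory.

(* A countable cofinal subset C of alpha writes alpha as the union of the
   closed segments [0, c], c in C.  Each of them is a smaller ordinal c plus
   the point c, hence a countable union of sets orthogonal to F by minimality
   of alpha, and a countable union of such countable unions is again one. *)

Section CountableOrthUnion.
Variables (T : Type) (F : set (set T)).

Lemma orthogonal0 : orthogonal F set0.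
Proof. by move=> x _; rewrite set0I. Qed.

Lemma orthogonal_set1 (t : T) : orthogonal F [set t].
Proof. by move=> x _; apply: sub_finite_set (finite_set1 t); apply: subIsetl. Qed.

Lemma countable_orth_union0 : countable_orth_union F set0.
Proof. by exists (fun=> set0); split; [move=> _; exact: orthogonal0 | rewrite bigcup0]. Qed.

Lemma countable_orth_union_set1 (t : T) : countable_orth_union F [set t].
Proof.
exists (fun=> [set t]); split=> [_|]; first exact: orthogonal_set1.
by rewrite bigcup_const //; exists 0%N.
Qed.

Lemma countable_orth_union_bigcup_nat (A : nat -> set T) :
  (forall k, countable_orth_union F (A k)) ->
  countable_orth_union F (\bigcup_k A k).
Proof.
move=> /choice[B BA].
have Borth k n : orthogonal F (B k n) by have [] := BA k.
have AE k : A k = \bigcup_n B k n by have [] := BA k.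
pose C m := if (unpickle m : option (nat * nat)) is Some (k, n) then B k n else set0.
exists C; split=> [m|].
  by rewrite /C; case: unpickle => [[k n]|]; [exact: Borth | exact: orthogonal0].
apply/seteqP; split=> [t [k _]|t [m _]].
  by rewrite AE => -[n _ Bt]; exists (pickle (k, n)); rewrite // /C pickleK.
by rewrite /C; case: unpickle => [[k n] Bt|//]; exists k; rewrite // AE; exists n.
Qed.

Lemma countable_orth_unionU (A B : set T) :
  countable_orth_union F A -> countable_orth_union F B ->
  countable_orth_union F (A `|` B).
Proof.
move=> cA cB; rewrite -bigcup2E; apply: countable_orth_union_bigcup_nat.
by case=> [|[|n]] //=; exact: countable_orth_union0.
Qed.

Lemma countable_orth_union_bigcup (I : Type) (D : set I) (A : I -> set T) :
  countable D -> (forall i, D i -> countable_orth_union F (A i)) ->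
  countable_orth_union F (\bigcup_(i in D) A i).
Proof.
move=> /pfcard_geP[-> _|/surjfunPex[e ->] cA].
  by rewrite bigcup_set0; exact: countable_orth_union0.
rewrite bigcup_image; apply: countable_orth_union_bigcup_nat => k.
by apply: cA; exists k.
Qed.

End CountableOrthUnion.

Section Segments.
Variables (d : Order.disp_t) (T : orderType d).

Lemma set_le_segU1 (c : T) : [set y | (y <= c)%O] = seg (Some c) `|` [set c].
Proof.
by apply/seteqP; split=> y /=; [rewrite le_eqVlt => /orP[/eqP|]; [right|left] |
  case=> [/ltW|->]].
Qed.

Variable a : option T.

Lemma seg_lt_closed (c y : T) : seg a c -> (y < c)%O -> seg a y.
Proof. by case: a => [x|] //= cx /lt_trans; apply. Qed.

Lemma seg_Some_proper (c : T) : seg a c -> seg (Some c) `<` seg a.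
Proof.
move=> ac; split=> [y /= yc|]; first exact: seg_lt_closed yc.
by move=> /(_ c ac) /=; rewrite ltxx.
Qed.

Lemma cofinal_seg_bigcup (C : set T) :
  cofinal_in (seg a) C -> seg a = \bigcup_(c in C) [set y | (y <= c)%O].
Proof.
move=> [Ca Ccof]; apply/seteqP; split=> [y /Ccof [c Cc yc]|y [c Cc /= yc]].
  by exists c.
move: yc; rewrite le_eqVlt => /orP[/eqP -> | yc]; first exact: Ca.
exact: seg_lt_closed (Ca c Cc) yc.
Qed.

End Segments.

Theorem proposition2p1 (d : Order.disp_t) (T : orderType d)
    (wo : well_ordered T) (F : set (set T)) (a : option T) :
  ~ countable_orth_union F (seg a) ->
  (forall b : option T, seg b `<` seg a -> countable_orth_union F (seg b)) ->
  uncountable_cofinality (seg a).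
Proof.
move=> not_union smaller C countC Ccof; apply: not_union.
rewrite (cofinal_seg_bigcup Ccof).
apply: countable_orth_union_bigcup countC _ => c Cc.
rewrite set_le_segU1; apply: countable_orth_unionU.
  exact/smaller/seg_Some_proper/Ccof.1.
exact: countable_orth_union_set1.
Qed.
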